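(* Let $\dot{\succcurlyeq}$ be a preference relation on the set $MS$ of mixed strategies over a propositional language $\mathcal{L}$ that admits an integral representation, and let $\succcurlyeq$ be its restriction to the set $\mathcal{B}$ of bets. Then a subjective model of uncertainty $(\Omega,t,\lambda)$, with either $t$ sound, or $t$ exact and $\lambda$ additive, is an integral representation of $\dot{\succcurlyeq}$ if and only if it is a representation of $\succcurlyeq$.
   Context: Let $\mathbb{P}$ be a set of propositional variables containing distinguished $\mathbf{T}$, $\mathbf{F}$, and $\mathcal{L}$ the language generated by $\neg,\land,\lor$. A strategy is a finitely supported $s:\mathcal{L}\to\mathbb{R}$; $S$ is the set of strategies and $MS$ the set of finitely supported lotteries over $S$ (mixed strategies). A bet is a finitely supported $b:\mathcal{L}\to[0,1]$ summing to $1$, viewed as a lottery over the primitive bets $b_\phi$ ($b_\phi$ being the strategy with $b_\phi(\phi)=1$ and $0$ elsewhere), so $\mathcal{B}\subseteq MS$. A truth valuation on $\Omega$ is $t:\mathcal{L}\to2^\Omega$ with $t(\mathbf{T})=\Omega,t(\mathbf{F})=\emptyset$; exact: logically equivalent statements have equal images; sound: exact, monotone, symmetric ($t(\neg\phi)=\Omega\setminus t(\phi)$) and $\land$-distributive ($t(\phi\land\psi)=t(\phi)\cap t(\psi)$). A likelihood appraisal on a field $\Sigma$ is $\lambda:\Sigma\to[0,1]$, $\lambda(\emptyset)=0,\lambda(\Omega)=1$; additive if finitely additive. $(\Omega,t,\lambda)$ represents $\succcurlyeq$ if $b\succcurlyeq b'\iff\sum_\phi b(\phi)\lambda(t(\phi))\ge\sum_\phi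 b'(\phi)\lambda(t(\phi))$. Integral: $\int x\,\mathrm{d}\lambda=\int_{-\infty}^\infty\lambda(\{x\ge r\})\mathrm{d}r$. For sound $t$, $t_\circ(s)=\sum_\phi s(\phi)\mathbf{1}_{t(\phi)}$. For exact $t'$ with additive $\lambda'$ such that $(\Omega',t',\lambda')$ represents $\succcurlyeq$, and any sound representation $(\Omega_0,t_0,\lambda_0)$ of $\succcurlyeq$: if $x=(t_0)_\circ(s)$ has image $\{\alpha_1>\dots>\alpha_n\}$, $\alpha_{n+1}=0$, and $t_0(\phi_k)=x^{-1}(\{\alpha_1,\dots,\alpha_k\})$, set $t'_\bullet(s)=[\sum_k(\alpha_k-\alpha_{k+1})\mathbf{1}_{t'(\phi_k)}]$ ($\lambda'$-a.e. class, independent of the choices). $\dot{\succcurlyeq}$ admits an integral representation $(\Omega,t,\lambda)$ if $\dot{\succcurlyeq}$ is linear in mixtures (represented by an expected-utility functional over lotteries) and for all pure strategies $s,s'\in S$: $s\,\dot{\succcurlyeq}\,s'$ iff $\int t_\circ(s)\mathrm{d}\lambda\ge\int t_\circ(s')\mathrm{d}\lambda$ (for sound $t$), respectively iff $\int t_\bullet(s)\mathrm{d}\lambda\ge\int t_\bullet(s')\mathrm{d}\lambda$ (for exact $t$ and additive $\lambda$). *)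

From HB Require Import structures.
From mathcomp Require Import all_boot all_order all_algebra.
From mathcomp Require Import finmap.
From mathcomp Require Import boolp classical_sets functions cardinality reals.

Set Implicit Arguments.
Unset Strict Implicit.
Unset Printing Implicit Defensive.

Import Order.TTheory GRing.Theory Num.Theory.
Local Open Scope ring_scope.
Local Open Scope classical_set_scope.

Inductive lform (V : Type) : Type :=
  | Var of V
  | Neg of lform V
  | And of lform V & lform V
  | Or  of lform V & lform V.

Arguments Var {V}.
Arguments Neg {V}.
Arguments And {V}.
Arguments Or {V}.

Section FormChoice.
Variable V : choiceType.

Fixpoint form_enc (f : lform V) : GenTree.tree V :=
  match f with
  | Var x => GenTree.Leaf x
  | Neg g => GenTree.Node 0 [:: form_enc g]
  | And g h => GenTree.Node 1 [:: form_enc g; form_enc h]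
  | Or g h => GenTree.Node 2 [:: form_enc g; form_enc h]
  end.

Fixpoint form_dec (t : GenTree.tree V) : option (lform V) :=
  match t with
  | GenTree.Leaf x => Some (Var x)
  | GenTree.Node 0 [:: a] =>
      if form_dec a is Some g then Some (Neg g) else None
  | GenTree.Node 1 [:: a; b] =>
      match form_dec a, form_dec b with
      | Some g, Some h => Some (And g h) | _, _ => None end
  | GenTree.Node 2 [:: a; b] =>
      match form_dec a, form_dec b with
      | Some g, Some h => Some (Or g h) | _, _ => None end
  | _ => None
  end.

Lemma form_encK : pcancel form_enc form_dec.
Proof. by elim=> [x|g IH|g IHg h IHh|g IHg h IHh] //=; rewrite ?IH ?IHg ?IHh. Qed.

HB.instance Definition _ := Equality.copy (lform V) (pcan_type form_encK).
HB.instance Definition _ := Choice.copy (lform V) (pcan_type form_encK).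
End FormChoice.

Section Semantics.
Variables (V : Type) (T F : V).

Fixpoint eval (v : V -> bool) (f : lform V) : bool :=
  match f with
  | Var x => v x
  | Neg g => ~~ eval v g
  | And g h => eval v g && eval v h
  | Or g h => eval v g || eval v h
  end.

Definition admissible (v : V -> bool) := v T = true /\ v F = false.

Definition lequiv (f g : lform V) :=
  forall v, admissible v -> eval v f = eval v g.
Definition entails (f g : lform V) :=
  forall v, admissible v -> eval v f -> eval v g.

Definition truth_valuation (Om : Type) (t : lform V -> set Om) :=
  t (Var T) = setT /\ t (Var F) = set0.

Definition exact (Om : Type) (t : lform V -> set Om) :=
  forall f g, lequiv f g -> t f = t g.

Definition monotone (Om : Type) (t : lform V -> set Om) :=
  forall f g, entails f g -> t f `<=` t g.

Definition symmetric (Om : Type) (t : lform V -> set Om) :=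
  forall f, t (Neg f) = ~` t f.

Definition and_distributive (Om : Type) (t : lform V -> set Om) :=
  forall f g, t (And f g) = t f `&` t g.

Definition sound (Om : Type) (t : lform V -> set Om) :=
  [/\ exact t, monotone t, symmetric t & and_distributive t].
End Semantics.

Definition set_field (Om : Type) (Sig : set (set Om)) :=
  [/\ Sig setT,
      (forall A, Sig A -> Sig (~` A)) &
      (forall A B, Sig A -> Sig B -> Sig (A `|` B))].

Definition likelihood (R : realType) (Om : Type) (Sig : set (set Om))
    (lam : set Om -> R) :=
  [/\ lam set0 = 0, lam setT = 1 &
      forall A, Sig A -> 0 <= lam A <= 1].

Definition additive (R : realType) (Om : Type) (Sig : set (set Om))
    (lam : set Om -> R) :=
  forall A B, Sig A -> Sig B -> A `&` B = set0 -> lam (A `|` B) = lam A + lam B.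

Definition model (R : realType) (V : Type) (T F : V) (Om : Type)
    (t : lform V -> set Om) (Sig : set (set Om)) (lam : set Om -> R) :=
  [/\ truth_valuation T F t, set_field Sig, (forall f, Sig (t f)) &
      likelihood Sig lam].

Definition strategy (R : realType) (V : choiceType) :=
  {fsfun lform V -> R with 0}.

(* finitely supported real functions on strategies; the mixed strategies
   are those among them that are lotteries *)
Definition mixed (R : realType) (V : choiceType) :=
  {fsfun strategy R V -> R with 0}.

Definition lottery (R : realType) (V : choiceType) (p : mixed R V) :=
  (forall s, 0 <= p s) /\ \sum_(s <- finsupp p) p s = 1.

Definition bet (R : realType) (V : choiceType) (b : strategy R V) :=
  (forall f, 0 <= b f <= 1) /\ \sum_(f <- finsupp b) b f = 1.

Definition prim (R : realType) (V : choiceType) (phi : lform V) : strategy R V :=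
  [fsfun x in [fset phi]%fset => 1 | 0].

(* a bet viewed as a lottery over the primitive bets *)
Definition lot_of_bet (R : realType) (V : choiceType) (b : strategy R V)
    : mixed R V :=
  [fsfun s in [fset prim R phi | phi in finsupp b]%fset =>
     \sum_(phi <- finsupp b) b phi * (s == prim R phi)%:R | 0].

Definition bet_pref (R : realType) (V : choiceType)
    (pref : mixed R V -> mixed R V -> Prop) (b b' : strategy R V) :=
  pref (lot_of_bet b) (lot_of_bet b').

Definition preference (R : realType) (V : choiceType)
    (pref : mixed R V -> mixed R V -> Prop) :=
  (forall p q, lottery p -> lottery q -> pref p q \/ pref q p) /\
  (forall p q r, lottery p -> lottery q -> lottery r ->
     pref p q -> pref q r -> pref p r).

Definition represents (R : realType) (V : choiceType)
    (pref : mixed R V -> mixed R V -> Prop)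
    (Om : Type) (t : lform V -> set Om) (lam : set Om -> R) :=
  forall b b', bet b -> bet b' ->
    (bet_pref pref b b' <->
     \sum_(f <- finsupp b') b' f * lam (t f)
       <= \sum_(f <- finsupp b) b f * lam (t f)).

(* the values of x, sorted strictly decreasingly: alpha_1 > ... > alpha_n *)
Definition levels (R : realType) (Om : Type) (x : Om -> R) : seq R :=
  sort (fun a b => b <= a) (fset_set (range x)).

(* Choquet integral of a simple (finitely valued) function:
   sum_k (alpha_k - alpha_(k+1)) lam {x >= alpha_k}, alpha_(n+1) = 0,
   i.e. int_0^oo lam{x>=r} dr + int_-oo^0 (lam{x>=r} - 1) dr. *)
Definition choquet (R : realType) (Om : Type) (lam : set Om -> R)
    (x : Om -> R) : R :=
  let a := levels x in
  \sum_(k < size a)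
     (nth 0 a k - nth 0 a k.+1) * lam [set w | nth 0 a k <= x w].

Definition indic (R : realType) (Om : Type) (A : set Om) (w : Om) : R :=
  if `[< A w >] then 1 else 0.
Arguments indic {R Om}.

Definition tcirc (R : realType) (V : choiceType) (Om : Type)
    (t : lform V -> set Om) (s : strategy R V) : Om -> R :=
  fun w => \sum_(f <- finsupp s) s f * indic (t f) w.

(* For a sound t0 and strategy s, with x = t0_circ(s) and levels
   alpha_1 > ... > alpha_n (indexed from 0 here):  phi is a valid choice
   of the phi_k, i.e. t0(phi_k) = x^-1{alpha_1, ..., alpha_k}. *)
Definition bullet_choice (R : realType) (V : choiceType) (Om0 : Type)
    (t0 : lform V -> set Om0) (s : strategy R V) (phi : nat -> lform V) :=
  let x := tcirc t0 s in
  let a := levels x in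
  forall k, (k < size a)%N ->
    t0 (phi k) = [set w | exists2 j, (j <= k)%N & x w = nth 0 a j].

(* a representative of t_bullet(s) = [sum_k (alpha_k - alpha_(k+1)) 1_{t(phi_k)}] *)
Definition tbullet (R : realType) (V : choiceType) (Om0 Om : Type)
    (t0 : lform V -> set Om0) (t : lform V -> set Om) (s : strategy R V)
    (phi : nat -> lform V) : Om -> R :=
  let a := levels (tcirc t0 s) in
  fun w => \sum_(k < size a) (nth 0 a k - nth 0 a k.+1) * indic (t (phi k)) w.

Definition EU (R : realType) (V : choiceType) (u : strategy R V -> R)
    (p : mixed R V) : R :=
  \sum_(s <- finsupp p) p s * u s.

Definition sound_rep (R : realType) (V : choiceType) (T F : V)
    (pref : mixed R V -> mixed R V -> Prop)
    (Om0 : Type) (t0 : lform V -> set Om0) (Sig0 : set (set Om0))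
    (lam0 : set Om0 -> R) :=
  [/\ model T F t0 Sig0 lam0, sound T F t0 & represents pref t0 lam0].

Definition int_rep_sound (R : realType) (V : choiceType) (T F : V)
    (pref : mixed R V -> mixed R V -> Prop)
    (Om : Type) (t : lform V -> set Om) (Sig : set (set Om))
    (lam : set Om -> R) :=
  [/\ model T F t Sig lam, sound T F t &
      forall p q, lottery p -> lottery q ->
        (pref p q <->
         EU (fun s => choquet lam (tcirc t s)) q
           <= EU (fun s => choquet lam (tcirc t s)) p)].

(* Integral representation, exact/additive case.  t_bullet is only defined
   when (Om, t, lam) represents the restriction to bets and a sound
   representation of it exists; the comparison is required for every
   sound representation and every admissible choice of the phi_k. *)
Definition int_rep_exact (R : realType) (V : choiceType) (T F : V)
    (pref : mixed R V -> mixed R V -> Prop)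
    (Om : Type) (t : lform V -> set Om) (Sig : set (set Om))
    (lam : set Om -> R) :=
  [/\ model T F t Sig lam, exact T F t, additive Sig lam,
      represents pref t lam &
      exists (Om0 : Type) (t0 : lform V -> set Om0) (Sig0 : set (set Om0))
              (lam0 : set Om0 -> R), sound_rep T F pref t0 Sig0 lam0] /\
      forall (Om0 : Type) (t0 : lform V -> set Om0) (Sig0 : set (set Om0))
             (lam0 : set Om0 -> R) (phi : strategy R V -> nat -> lform V),
        sound_rep T F pref t0 Sig0 lam0 ->
        (forall s, bullet_choice t0 s (phi s)) ->
        forall p q, lottery p -> lottery q ->
          (pref p q <->
           EU (fun s => choquet lam (tbullet t0 t s (phi s))) q
             <= EU (fun s => choquet lam (tbullet t0 t s (phi s))) p).

Definition admits_int_rep (R : realType) (V : choiceType) (T F : V)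
    (pref : mixed R V -> mixed R V -> Prop) :=
  exists (Om : Type) (t : lform V -> set Om) (Sig : set (set Om))
         (lam : set Om -> R),
    int_rep_sound T F pref t Sig lam \/ int_rep_exact T F pref t Sig lam.

From Pilot Require Import Defs.
From HB Require Import structures.
From mathcomp Require Import all_boot all_order all_algebra.
From mathcomp Require Import finmap.
From mathcomp Require Import boolp classical_sets functions cardinality reals.

(* Both kinds of integral representation are governed by the values lam(t(phi)) of a
   model on formulas, and these are fixed by the preference on bets: every model values
   the bet v b_T + (1 - v) b_F at v, so comparing it with b_phi for v = lam(t(phi)) forces
   any two representations of the bets to agree on every lam(t(phi)).
   If t is sound, each level set {t_circ(s) >= v} or {t_circ(s) > v} is the truth set
   t(psi) of an explicit formula psi, and by Abel summation the Choquet integral of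
   x = t_circ(s) is sum_v v (lam{x >= v} - lam{x > v}); hence it is the same in all
   sound representations.  If t is exact and lam additive, the Choquet integral is linear on
   simple functions, so the integral of t_bullet(s) is
   sum_k (alpha_k - alpha_(k+1)) lam(t(phi_k)), the Choquet integral of (t_0)_circ(s) in
   the sound representation t_0.  So every representation of the bets induces the same
   utility on pure strategies as the given integral representation, hence, by linearity
   in mixtures, the same preference on MS. *)

(* A module keeps the import of GRing.Theory, whose [additive] would shadow
   Defs.additive, away from the statement of corollary1. *)
Module ChoquetRepresentation.

Set Implicit Arguments.
Unset Strict Implicit.
Unset Printing Implicit Defensive.

Import Order.TTheory GRing.Theory Num.Theory.
Local Open Scope ring_scope.
Local Open Scope classical_set_scope.

Lemma eq_big_uniq_support (I : eqType) (M : nmodType) (f : I -> M) (S S' : seq I) :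
  uniq S -> uniq S' ->
  (forall i, f i != 0 -> i \in S) -> (forall i, f i != 0 -> i \in S') ->
  \sum_(i <- S) f i = \sum_(i <- S') f i.
Proof.
move=> uS uS' fS fS'.
have nz S0 : \sum_(i <- S0) f i = \sum_(i <- S0 | f i != 0) f i.
  by rewrite [RHS]big_mkcond; apply: eq_bigr => i _; case: eqP.
rewrite !nz -[LHS]big_filter -[RHS]big_filter.
apply/perm_big/uniq_perm; rewrite ?filter_uniq // => i.
by rewrite !mem_filter; case: eqP => //= /eqP /[dup] /fS -> /fS' ->.
Qed.

Lemma sum_by_parts_nth (R : pzRingType) (a : seq R) (g : R -> R) :
  \sum_(k < size a) (a`_k - a`_k.+1) * g a`_k =
  \sum_(k < size a) a`_k * (g a`_k - if k : nat is j.+1 then g a`_j else 0).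
Proof.
under eq_bigr do rewrite mulrBl.
under [RHS]eq_bigr do rewrite mulrBr.
rewrite !sumrB; congr (_ - _).
case sa: (size a) => [|n]; first by rewrite !big_ord0.
rewrite big_ord_recr big_ord_recl /= mulr0 add0r.
by rewrite (nth_default 0 (_ : size a <= n.+1)%N) ?sa // mul0r addr0.
Qed.

Section Levels.
Variables (R : realType) (Om : Type) (x : Om -> R).
Hypothesis fin_x : finite_set (range x).
Local Notation a := (levels x).

Lemma levels_uniq : uniq a.
Proof. by rewrite sort_uniq fset_uniq. Qed.

Lemma mem_levels v : (v \in a) = (v \in range x).
Proof. by rewrite mem_sort in_fset_set. Qed.

Lemma levels_sorted : sorted >%R a.
Proof. by have := @sort_lt_sorted _ R^d (fset_set (range x)); rewrite fset_uniq. Qed.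

Lemma nth_levels_lt i j : (i < size a)%N -> (j < size a)%N -> (a`_i < a`_j) = (j < i)%N.
Proof.
by move=> ia ja; apply: (@lt_sorted_ltn_nth _ R^d 0 a levels_sorted j i).
Qed.

Lemma nth_levels_le i j : (i < size a)%N -> (j < size a)%N -> (a`_i <= a`_j) = (j <= i)%N.
Proof. by move=> ia ja; rewrite leNgt nth_levels_lt // ltnNge negbK. Qed.

Lemma levels_index w : exists2 i, (i < size a)%N & x w = a`_i.
Proof.
have xa : x w \in a by rewrite mem_levels mem_range.
by exists (index (x w) a); rewrite ?index_mem ?nth_index.
Qed.

Lemma levels_ge k : (k < size a)%N ->
  [set w | a`_k <= x w] = [set w | exists2 j, (j <= k)%N & x w = a`_j].
Proof.
move=> ka; apply/seteqP; split=> w /=.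
- by have [i ia ->] := levels_index w; rewrite nth_levels_le // => ik; exists i.
- by move=> [j jk ->]; rewrite nth_levels_le // (leq_ltn_trans jk).
Qed.

Lemma levels_gt k : (k < size a)%N ->
  [set w | a`_k < x w] = [set w | exists2 j, (j < k)%N & x w = a`_j].
Proof.
move=> ka; apply/seteqP; split=> w /=.
- by have [i ia ->] := levels_index w; rewrite nth_levels_lt // => ik; exists i.
- by move=> [j jk ->]; rewrite nth_levels_lt // (ltn_trans jk).
Qed.

End Levels.

Section Choquet.
Variables (R : realType) (Om : Type) (lam : set Om -> R).
Hypothesis lam_set0 : lam set0 = 0.

Lemma nonempty_of_lam_neq0 B : lam B != 0 -> B !=set0.
Proof. by apply: contra_neqP => /set0P/negP; rewrite negbK => /eqP ->. Qed.

Lemma choquet_levels (x : Om -> R) : finite_set (range x) ->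
  choquet lam x =
  \sum_(v <- levels x) v * (lam [set w | v <= x w] - lam [set w | v < x w]).
Proof.
move=> fin; rewrite /choquet /= (sum_by_parts_nth _ (fun r => lam [set w | r <= x w])).
rewrite (big_nth 0) big_mkord.
apply: eq_bigr => -[k /= ka] _; congr (_ * (_ - _)); rewrite levels_gt //.
case: k ka => [|j] ka.
- by rewrite -lam_set0; congr lam; apply/seteqP; split=> w // [].
- by rewrite levels_ge // ltnW.
Qed.

Lemma choquet_cover (x : Om -> R) (S : seq R) : uniq S -> (forall w, x w \in S) ->
  choquet lam x = \sum_(v <- S) v * (lam [set w | v <= x w] - lam [set w | v < x w]).
Proof.
move=> uS xS; have fin : finite_set (range x).
  by apply: sub_finite_set (finite_seq S) => _ [w _ <-]; exact: xS.
have attained v : v * (lam [set w | v <= x w] - lam [set w | v < x w]) != 0 ->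
    exists w, x w = v.
  apply: contra_neqP => nv; suff -> : [set w | v <= x w] = [set w | v < x w].
    by rewrite subrr mulr0.
  apply/seteqP; split=> w /=; last exact: ltW.
  by rewrite le_eqVlt => /orP[/eqP vx|//]; case: nv; exists w.
rewrite choquet_levels //.
apply: eq_big_uniq_support => // [|v /attained [w <-]|v /attained [w <-]].
- exact: levels_uniq.
- by rewrite mem_levels // mem_range.
- exact: xS.
Qed.

Lemma choquet_indic (A : set Om) : choquet lam (indic A) = lam A.
Proof.
have u10 : uniq [:: 1; 0 : R] by rewrite /= inE oner_eq0.
have cover w : indic A w \in [:: 1; 0 : R].
  by rewrite /indic !inE; case: asboolP; rewrite eqxx ?orbT.
rewrite (choquet_cover u10 cover).
rewrite !big_cons big_nil mul0r !addr0 mul1r.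
have -> : [set w | 1 < indic A w :> R] = set0.
  by apply/seteqP; split=> w //=; rewrite /indic; case: asboolP; rewrite ?ltxx // ltr10.
have -> : [set w | 1 <= indic A w :> R] = A.
  by apply/seteqP; split=> w /=; rewrite /indic; case: asboolP; rewrite ?ler10.
by rewrite lam_set0 subr0.
Qed.

End Choquet.

Section SumIndic.
Variables (R : realType) (Om I : Type) (c : I -> R) (A : I -> set Om).

Lemma indic_in (B : set Om) w : B w -> indic B w = 1 :> R.
Proof. by move=> Bw; rewrite /indic asboolT. Qed.

Lemma indic_notin (B : set Om) w : ~ B w -> indic B w = 0 :> R.
Proof. by move=> Bw; rewrite /indic asboolF. Qed.

Fixpoint subsums (l : seq R) : seq R :=
  if l is d :: l' then subsums l' ++ map (+%R d) (subsums l') else [:: 0].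

Lemma sum_indic_subsums (r : seq I) w :
  \sum_(i <- r) c i * indic (A i) w \in subsums (map c r).
Proof.
elim: r => [|i r IH]; first by rewrite big_nil inE.
rewrite big_cons /= mem_cat; have [Aw|Aw] := pselect (A i w).
- by rewrite indic_in // mulr1 map_f ?orbT.
- by rewrite indic_notin // mulr0 add0r IH.
Qed.

Lemma finite_range_sum_indic (r : seq I) :
  finite_set (range (fun w => \sum_(i <- r) c i * indic (A i) w)).
Proof.
apply: sub_finite_set (finite_seq (subsums (map c r))) => _ [w _ <-].
exact: sum_indic_subsums.
Qed.

Lemma preimage_sum_indic_nil (P : R -> Prop) :
  [set w | P (\sum_(i <- [::]) c i * indic (A i) w)] = [set _ | P 0].
Proof. by apply/seteqP; split=> w /=; rewrite big_nil. Qed.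

Lemma preimage_sum_indic_cons (P : R -> Prop) i r :
  [set w | P (\sum_(j <- i :: r) c j * indic (A j) w)] =
  (A i `&` [set w | P (c i + \sum_(j <- r) c j * indic (A j) w)]) `|`
  (~` A i `&` [set w | P (\sum_(j <- r) c j * indic (A j) w)]).
Proof.
apply/seteqP; split=> w /=; rewrite big_cons; have [Aw|Aw] := pselect (A i w).
- by rewrite indic_in // mulr1; left.
- by rewrite indic_notin // mulr0 add0r; right.
- by rewrite indic_in // mulr1 => -[[]|[]].
- by rewrite indic_notin // mulr0 add0r => -[[]|[]].
Qed.

End SumIndic.

Section FieldOfSets.
Variables (Om : Type) (Sig : set (set Om)).
Hypothesis fieldSig : set_field Sig.

Lemma field_set0 : Sig set0.
Proof. by have [ST SC _] := fieldSig; rewrite -setCT; apply: SC. Qed.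

Lemma field_setI A B : Sig A -> Sig B -> Sig (A `&` B).
Proof.
have [_ SC SU] := fieldSig => SA SB.
by rewrite -[A `&` B]setCK setCI; apply/SC/SU; apply: SC.
Qed.

Lemma field_preimage_sum_indic (R : realType) (I : Type) (c : I -> R) (A : I -> set Om)
    (r : seq I) (P : R -> Prop) :
  (forall i, Sig (A i)) -> Sig [set w | P (\sum_(i <- r) c i * indic (A i) w)].
Proof.
have [ST SC SU] := fieldSig => SA; elim: r P => [|i r IH] P.
  rewrite preimage_sum_indic_nil; have [P0|P0] := pselect (P 0).
  - by have -> : [set _ : Om | P 0] = setT by apply/seteqP; split.
  - have -> : [set _ : Om | P 0] = set0 by apply/seteqP; split=> // w /P0.
    exact: field_set0.
rewrite preimage_sum_indic_cons; apply: SU; apply: field_setI;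
  [exact: SA | exact: (IH (fun u => P (c i + u))) | exact/SC/SA | exact: IH].
Qed.

End FieldOfSets.

Section AdditiveAppraisal.
Variables (R : realType) (Om : Type) (Sig : set (set Om)) (lam : set Om -> R).
Hypotheses (fieldSig : set_field Sig) (addlam : Defs.additive Sig lam) (lam_set0 : lam set0 = 0).

Lemma additive_setIC A B : Sig A -> Sig B -> lam (A `&` B) + lam (~` A `&` B) = lam B.
Proof.
have [_ SC _] := fieldSig => SA SB.
have disj : (A `&` B) `&` (~` A `&` B) = set0 by rewrite setIACA setICr set0I.
have SAB := field_setI fieldSig SA SB; have SnAB := field_setI fieldSig (SC _ SA) SB.
by rewrite -addlam // -setIUl setUv setTI.
Qed.

Lemma sum_lam_level_cover (g : R -> R) (B : set Om) (y : Om -> R) (S S' : seq R) :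
  uniq S -> uniq S' -> (forall w, B w -> y w \in S) -> (forall w, B w -> y w \in S') ->
  \sum_(u <- S) g u * lam (B `&` [set w | y w = u]) =
  \sum_(u <- S') g u * lam (B `&` [set w | y w = u]).
Proof.
move=> uS uS' yS yS'.
by apply: eq_big_uniq_support => // u;
  rewrite mulf_eq0 negb_or => /andP[_ /(nonempty_of_lam_neq0 lam_set0) [w [Bw <-]]];
  [exact: yS | exact: yS'].
Qed.

Lemma sum_lam_levels (B : set Om) (y : Om -> R) (S : seq R) :
  Sig B -> (forall P, Sig [set w | P (y w)]) -> uniq S -> (forall w, B w -> y w \in S) ->
  \sum_(u <- S) lam (B `&` [set w | y w = u]) = lam B.
Proof.
move=> SB Sy uS yS.
suff -> : \sum_(u <- S) lam (B `&` [set w | y w = u]) = lam (B `&` [set w | y w \in S]).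
  by congr lam; apply/seteqP; split=> [w []|w Bw] //; split=> //; exact: yS.
elim: S uS {yS} => [|u S IH] /=.
  by rewrite big_nil -lam_set0 => _; congr lam; apply/seteqP; split=> w // [].
move=> /andP[uS uU]; rewrite big_cons IH // -addlam.
- congr lam; apply/seteqP; split=> w /=.
  + by move=> [[Bw ->]|[Bw yw]]; rewrite in_cons ?eqxx ?yw ?orbT.
  + by move=> [Bw]; rewrite in_cons => /orP[/eqP|]; [left|right].
- exact: (field_setI fieldSig SB (Sy (fun z => z = u))).
- exact: (field_setI fieldSig SB (Sy (fun z => z \in S))).
- by apply/seteqP; split=> w // [[_ /= ->] [_ /=]]; rewrite (negbTE uS).
Qed.

Section SumIndic.
Variables (I : Type) (c : I -> R) (A : I -> set Om).
Hypothesis SigA : forall i, Sig (A i).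
Local Notation sum_indic r := (fun w => \sum_(i <- r) c i * indic (A i) w).

Lemma sum_level_sum_indic_cons i r (S S' : seq R) :
  uniq S -> uniq S' ->
  (forall w, sum_indic r w \in S) -> (forall w, sum_indic (i :: r) w \in S') ->
  \sum_(v <- S') v * lam [set w | sum_indic (i :: r) w = v] =
  c i * lam (A i) + \sum_(u <- S) u * lam [set w | sum_indic r w = u].
Proof.
move=> uS uS' yS xS'; have [_ SC _] := fieldSig.
have Sy P : Sig [set w | P (sum_indic r w)] := field_preimage_sum_indic fieldSig c r P SigA.
have lam_level v : lam [set w | sum_indic (i :: r) w = v] =
    lam (A i `&` [set w | c i + sum_indic r w = v]) +
    lam (~` A i `&` [set w | sum_indic r w = v]).
  have := addlam (field_setI fieldSig (SigA i) (Sy (fun u => c i + u = v)))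
    (field_setI fieldSig (SC _ (SigA i)) (Sy (fun u => u = v))).
  move=> <-; last by apply/seteqP; split=> w // [[Aw _] [nAw _]].
  by congr lam; exact: (preimage_sum_indic_cons c A (fun u => u = v)).
under eq_bigr do rewrite lam_level mulrDr.
rewrite big_split /=.
have -> : \sum_(v <- S') v * lam (A i `&` [set w | c i + sum_indic r w = v]) =
    \sum_(u <- S) (c i + u) * lam (A i `&` [set w | sum_indic r w = u]).
  transitivity (\sum_(v <- map (+%R (c i)) S)
      v * lam (A i `&` [set w | c i + sum_indic r w = v])).
    apply: sum_lam_level_cover => //; first by rewrite map_inj_uniq //; exact: addrI.
      by move=> w Aw; have := xS' w; rewrite big_cons indic_in // mulr1.
    by move=> w _; rewrite map_f.
  rewrite big_map; apply: eq_bigr => u _; congr (_ * lam (_ `&` _)).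
  by apply/seteqP; split=> w /=; [exact: addrI | move->].
have -> : \sum_(v <- S') v * lam (~` A i `&` [set w | sum_indic r w = v]) =
    \sum_(u <- S) u * lam (~` A i `&` [set w | sum_indic r w = u]).
  apply: sum_lam_level_cover => // w nAw.
  by have := xS' w; rewrite big_cons indic_notin // mulr0 add0r.
under [X in X + _ = _]eq_bigr do rewrite mulrDl.
rewrite big_split /= -big_distrr sum_lam_levels // -addrA -big_split.
congr (_ + _); apply: eq_bigr => u _ /=.
by rewrite -mulrDr additive_setIC //; exact: (Sy (fun z => z = u)).
Qed.

Lemma sum_level_sum_indic r :
  \sum_(v <- undup (subsums (map c r))) v * lam [set w | sum_indic r w = v] =
  \sum_(i <- r) c i * lam (A i).
Proof.
have cover r' w : sum_indic r' w \in undup (subsums (map c r')).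
  by rewrite mem_undup; exact: sum_indic_subsums.
elim: r => [|i r IH]; first by rewrite /= !big_cons !big_nil mul0r addr0.
by rewrite (sum_level_sum_indic_cons (S := undup (subsums (map c r)))) ?undup_uniq ?IH ?big_cons.
Qed.

Lemma choquet_sum_indic r : choquet lam (sum_indic r) = \sum_(i <- r) c i * lam (A i).
Proof.
have Sx P : Sig [set w | P (sum_indic r w)] := field_preimage_sum_indic fieldSig c r P SigA.
rewrite (choquet_cover lam_set0 (undup_uniq (subsums (map c r)))) => [|w]; last first.
  by rewrite mem_undup; exact: sum_indic_subsums.
rewrite -sum_level_sum_indic; apply: eq_bigr => v _ /=; congr (_ * _).
have -> : [set w | v <= sum_indic r w] =
    [set w | v < sum_indic r w] `|` [set w | sum_indic r w = v].
  apply/seteqP; split=> w /=; last by case=> [/ltW|->].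
  by rewrite le_eqVlt => /orP[/eqP ->|]; [right|left].
rewrite addlam; first by rewrite addrAC subrr add0r.
- exact: (Sx (fun u => v < u)).
- exact: (Sx (fun u => u = v)).
- by apply/seteqP; split=> w // [/= + xv]; rewrite xv ltxx.
Qed.

End SumIndic.
End AdditiveAppraisal.

Section Valuations.
Variables (R : realType) (V : choiceType) (T F : V).

Lemma sound_Or (Om : Type) (t : lform V -> set Om) f g :
  sound T F t -> t (Or f g) = t f `|` t g.
Proof.
move=> [ex _ sy ad].
rewrite (ex _ (Neg (And (Neg f) (Neg g)))); last by move=> v _ /=; rewrite negb_and !negbK.
by rewrite sy ad !sy setCI !setCK.
Qed.

Fixpoint level_form (c : lform V -> R) (r : seq (lform V)) (P : pred R) : lform V :=
  if r is f :: r' then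
    Or (And f (level_form c r' (fun u => P (c f + u)))) (And (Neg f) (level_form c r' P))
  else if P 0 then Var T else Var F.

Lemma level_formE (Om : Type) (t : lform V -> set Om) c r (P : pred R) :
  truth_valuation T F t -> sound T F t ->
  t (level_form c r P) = [set w | P (\sum_(f <- r) c f * indic (t f) w)].
Proof.
move=> [tT tF] snd; have [_ _ sy ad] := snd.
elim: r P => [|f r IH] P /=.
  transitivity [set _ : Om | P 0]; last exact: esym (preimage_sum_indic_nil c t (fun u => P u)).
  by case: ifP => P0; [rewrite tT|rewrite tF]; apply/seteqP; split=> w //=; rewrite P0.
rewrite sound_Or // !ad sy !IH.
exact: esym (preimage_sum_indic_cons c t (fun u => P u) f r).
Qed.

Lemma choquet_tcirc_sound (Om Om' : Type) (t : lform V -> set Om) (t' : lform V -> set Om')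
    (lam : set Om -> R) (lam' : set Om' -> R) (s : strategy R V) :
  truth_valuation T F t -> sound T F t -> lam set0 = 0 ->
  truth_valuation T F t' -> sound T F t' -> lam' set0 = 0 ->
  (forall f, lam (t f) = lam' (t' f)) ->
  choquet lam (tcirc t s) = choquet lam' (tcirc t' s).
Proof.
move=> tv sd lam_set0 tv' sd' lam'_set0 E.
have cover Om1 (t1 : lform V -> set Om1) w :
    tcirc t1 s w \in undup (subsums (map s (finsupp s))).
  by rewrite mem_undup; exact: sum_indic_subsums.
rewrite (choquet_cover lam_set0 (undup_uniq _) (cover _ t)).
rewrite (choquet_cover lam'_set0 (undup_uniq _) (cover _ t')).
have level (P : pred R) : lam [set w | P (tcirc t s w)] = lam' [set w | P (tcirc t' s w)].
  by rewrite /tcirc -!level_formE // E.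
by apply: eq_bigr => v _; rewrite (level (>= v)) (level (> v)).
Qed.

Definition level_choice (Om : Type) (t : lform V -> set Om) (s : strategy R V) (k : nat) :=
  level_form s (finsupp s) (>= (levels (tcirc t s))`_k).

Lemma bullet_choice_level_choice (Om : Type) (t : lform V -> set Om) (s : strategy R V) :
  truth_valuation T F t -> sound T F t -> bullet_choice t s (level_choice t s).
Proof.
rewrite /bullet_choice /= => tv sd k ks; rewrite level_formE //.
exact: (levels_ge (finite_range_sum_indic _ _ _) ks).
Qed.

Lemma choquet_bullet_choice (Om0 : Type) (t0 : lform V -> set Om0) (lam0 : set Om0 -> R)
    (s : strategy R V) (phi : nat -> lform V) :
  bullet_choice t0 s phi ->
  let a := levels (tcirc t0 s) in
  choquet lam0 (tcirc t0 s) = \sum_(k < size a) (a`_k - a`_k.+1) * lam0 (t0 (phi k)).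
Proof.
move=> bc /=; apply: eq_bigr => -[k ks] _ /=; rewrite bc //.
by rewrite (levels_ge (finite_range_sum_indic _ _ _) ks).
Qed.

Lemma choquet_tbullet (Om Om0 : Type) (t : lform V -> set Om) (Sig : set (set Om))
    (lam : set Om -> R) (t0 : lform V -> set Om0) (lam0 : set Om0 -> R)
    (s : strategy R V) (phi : nat -> lform V) :
  model T F t Sig lam -> Defs.additive Sig lam -> (forall f, lam (t f) = lam0 (t0 f)) ->
  bullet_choice t0 s phi ->
  choquet lam (tbullet t0 t s phi) = choquet lam0 (tcirc t0 s).
Proof.
move=> [_ fieldSig Sigt [lam_set0 _ _]] addlam E bc.
rewrite (choquet_bullet_choice _ bc) /=; under eq_bigr => k _ do rewrite -E.
by apply: (choquet_sum_indic fieldSig addlam lam_set0) => k; exact: Sigt.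
Qed.

End Valuations.

Section Bets.
Variables (R : realType) (V : choiceType).

Lemma sum_finsupp_sub (K : choiceType) (p : {fsfun K -> R with 0}) (S : {fset K})
    (g : K -> R) :
  (finsupp p `<=` S)%fset -> \sum_(k <- finsupp p) p k * g k = \sum_(k <- S) p k * g k.
Proof. by move=> pS; apply: big_fset_incl => // k _ kp; rewrite fsfun_dflt // mul0r. Qed.

Lemma primE (phi f : lform V) : prim R phi f = (f == phi)%:R.
Proof. by rewrite fsfun_fun inE; case: eqP. Qed.

Lemma finsupp_prim (phi : lform V) : finsupp (prim R phi) = [fset phi]%fset.
Proof.
by apply/fsetP => f; rewrite mem_finsupp primE inE; case: (f == phi); rewrite ?oner_eq0 ?eqxx.
Qed.

Lemma sum_prim (phi : lform V) (h : lform V -> R) :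
  \sum_(f <- finsupp (prim R phi)) prim R phi f * h f = h phi.
Proof. by rewrite finsupp_prim big_seq_fset1 primE eqxx mul1r. Qed.

Lemma prim_inj : injective (@prim R V).
Proof. by move=> phi psi E; apply/fset1P; rewrite -finsupp_prim -E finsupp_prim fset11. Qed.

Lemma prim_bet (phi : lform V) : bet (prim R phi).
Proof.
split; first by move=> f; rewrite primE; case: eqP; rewrite ?lexx ?ler01.
by rewrite finsupp_prim big_seq_fset1 primE eqxx.
Qed.

Lemma tcirc_prim (Om : Type) (t : lform V -> set Om) (phi : lform V) :
  tcirc t (prim R phi) = indic (t phi).
Proof. by apply: funext => w; rewrite /tcirc sum_prim. Qed.

Lemma lot_of_bet_prim (b : strategy R V) (phi : lform V) :
  phi \in finsupp b -> lot_of_bet b (prim R phi) = b phi.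
Proof.
move=> phib; rewrite fsfun_fun in_imfset //=.
under eq_bigr do rewrite (inj_eq prim_inj).
rewrite (big_fsetD1 phi) //= eqxx mulr1 big1_fset ?addr0 // => psi.
by rewrite !inE eq_sym => /andP[/negbTE -> _] _; rewrite mulr0.
Qed.

Lemma finsupp_lot_of_bet (b : strategy R V) :
  (finsupp (lot_of_bet b) `<=` [fset prim R phi | phi in finsupp b])%fset.
Proof.
by apply/fsubsetP => s; rewrite mem_finsupp fsfun_fun; case: ifP; rewrite ?eqxx.
Qed.

Lemma EU_lot_of_bet (u : strategy R V -> R) (b : strategy R V) :
  EU u (lot_of_bet b) = \sum_(phi <- finsupp b) b phi * u (prim R phi).
Proof.
rewrite /EU (sum_finsupp_sub _ (finsupp_lot_of_bet b)) big_imfset /=.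
  by apply: eq_big_seq => phi phib; rewrite lot_of_bet_prim.
by move=> phi psi _ _; exact: prim_inj.
Qed.

Lemma lot_of_bet_lottery (b : strategy R V) : bet b -> lottery (lot_of_bet b).
Proof.
move=> [b01 b1]; split.
- move=> s; rewrite fsfun_fun; case: ifP => // _.
  by apply: sumr_ge0 => phi _; apply: mulr_ge0; [case/andP: (b01 phi)|exact: ler0n].
- have := EU_lot_of_bet (fun _ => 1) b; rewrite /EU.
  by under eq_bigr do rewrite mulr1; move=> ->; under eq_bigr do rewrite mulr1.
Qed.

Lemma EU_choquet_lot_of_bet (Om : Type) (t : lform V -> set Om) (lam : set Om -> R)
    (b : strategy R V) :
  lam set0 = 0 ->
  EU (fun s => choquet lam (tcirc t s)) (lot_of_bet b) = \sum_(f <- finsupp b) b f * lam (t f).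
Proof.
by move=> lam_set0; rewrite EU_lot_of_bet; apply: eq_bigr => f _; rewrite tcirc_prim choquet_indic.
Qed.

End Bets.

Section Representations.
Variables (R : realType) (V : choiceType) (T F : V).
Hypothesis TF : T <> F.

Definition bet_TF (v : R) : strategy R V :=
  [fsfun g in [fset Var T; Var F]%fset => if g == Var T then v else 1 - v | 0].

Lemma sum_bet_TF v (h : lform V -> R) :
  \sum_(g <- finsupp (bet_TF v)) bet_TF v g * h g = v * h (Var T) + (1 - v) * h (Var F).
Proof.
have FT : (Var F == Var T) = false by apply/eqP => -[/esym].
have sub : (finsupp (bet_TF v) `<=` [fset Var T; Var F])%fset.
  by apply/fsubsetP => g; rewrite mem_finsupp fsfun_fun; case: ifP; rewrite ?eqxx.
have TF' : Var T != Var F by rewrite eq_sym FT.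
rewrite (sum_finsupp_sub _ sub) big_fsetU1 ?inE //=.
by rewrite big_seq_fset1 !fsfun_fun !inE !eqxx FT orbT.
Qed.

Lemma bet_TF_bet v : 0 <= v <= 1 -> bet (bet_TF v).
Proof.
move=> /andP[v0 v1]; split.
- move=> g; rewrite fsfun_fun; case: ifP => _; last by rewrite lexx ler01.
  by case: ifP => _; rewrite ?v0 ?v1 // subr_ge0 v1 lerBlDr lerDl.
- have := sum_bet_TF v (fun _ => 1); rewrite !mulr1 subrKC => <-.
  by apply: eq_bigr => g _; rewrite mulr1.
Qed.

Lemma sum_bet_TF_model (Om : Type) (t : lform V -> set Om) (Sig : set (set Om))
    (lam : set Om -> R) v :
  model T F t Sig lam -> \sum_(g <- finsupp (bet_TF v)) bet_TF v g * lam (t g) = v.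
Proof.
move=> [[tT tF] _ _ [lam_set0 lam_setT _]].
by rewrite sum_bet_TF tT tF lam_set0 lam_setT mulr0 addr0 mulr1.
Qed.

Lemma represents_lam_eq (pref : mixed R V -> mixed R V -> Prop)
    (Om : Type) (t : lform V -> set Om) (Sig : set (set Om)) (lam : set Om -> R)
    (Om' : Type) (t' : lform V -> set Om') (Sig' : set (set Om')) (lam' : set Om' -> R) :
  model T F t Sig lam -> represents pref t lam ->
  model T F t' Sig' lam' -> represents pref t' lam' ->
  forall f, lam (t f) = lam' (t' f).
Proof.
move=> md rep md' rep' f; have [_ _ Sigt [_ _ lam01]] := md.
have mb := bet_TF_bet (lam01 _ (Sigt f)); have pb := prim_bet R f.
have sum_t := @sum_bet_TF_model _ t Sig lam (lam (t f)) md.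
have sum_t' := @sum_bet_TF_model _ t' Sig' lam' (lam (t f)) md'.
have pref_fb : bet_pref pref (prim R f) (bet_TF (lam (t f))).
  by apply/(rep _ _ pb mb); rewrite sum_prim sum_t.
have pref_bf : bet_pref pref (bet_TF (lam (t f))) (prim R f).
  by apply/(rep _ _ mb pb); rewrite sum_prim sum_t.
move: pref_fb pref_bf => /(rep' _ _ pb mb) + /(rep' _ _ mb pb).
by rewrite !sum_prim sum_t' => le1 le2; apply/eqP; rewrite eq_le le1 le2.
Qed.

Lemma int_rep_sound_represents (pref : mixed R V -> mixed R V -> Prop)
    (Om : Type) (t : lform V -> set Om) (Sig : set (set Om)) (lam : set Om -> R) :
  int_rep_sound T F pref t Sig lam -> represents pref t lam.
Proof.
move=> [[_ _ _ [lam_set0 _ _]] _ H] b b' hb hb'.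
by rewrite -!EU_choquet_lot_of_bet //; exact: H (lot_of_bet_lottery hb) (lot_of_bet_lottery hb').
Qed.

End Representations.

Section IntegralRepresentations.
Variables (R : realType) (V : choiceType) (T F : V).
Hypothesis TF : T <> F.
Variable pref : mixed R V -> mixed R V -> Prop.
Hypothesis adm : admits_int_rep T F pref.

Lemma admits_int_rep_sound_rep :
  exists (Om0 : Type) (t0 : lform V -> set Om0) (Sig0 : set (set Om0)) (lam0 : set Om0 -> R),
    sound_rep T F pref t0 Sig0 lam0.
Proof.
case: adm => Om [t [Sig [lam [H|[[_ _ _ _ H] _]]]]] //.
exists Om, t, Sig, lam; have [md sd _] := H; split=> //.
exact: int_rep_sound_represents H.
Qed.

Lemma sound_rep_int_rep (Om0 : Type) (t0 : lform V -> set Om0) (Sig0 : set (set Om0))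
    (lam0 : set Om0 -> R) :
  sound_rep T F pref t0 Sig0 lam0 ->
  forall p q, lottery p -> lottery q ->
    (pref p q <-> EU (fun s => choquet lam0 (tcirc t0 s)) q
                    <= EU (fun s => choquet lam0 (tcirc t0 s)) p).
Proof.
move=> srep; have [md0 sd0 rep0] := srep; have [tv0 _ _ [lam0_set0 _ _]] := md0.
case: adm => Om [t [Sig [lam [H|[[md _ ad rep _] H]]]]].
- have [md sd int] := H; have [tv _ _ [lam_set0 _ _]] := md.
  have -> : (fun s => choquet lam0 (tcirc t0 s)) = (fun s => choquet lam (tcirc t s)).
    apply: funext => s; apply: (@choquet_tcirc_sound _ _ T F) => //.
    exact: (represents_lam_eq TF md0 rep0 md (int_rep_sound_represents H)).
  exact: int.
- have -> : (fun s => choquet lam0 (tcirc t0 s)) =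
            (fun s => choquet lam (tbullet t0 t s (level_choice T F t0 s))).
    apply: funext => s; symmetry; apply: (choquet_tbullet md ad).
      exact: (represents_lam_eq TF md rep md0 rep0).
    exact: bullet_choice_level_choice.
  exact: (H _ _ _ _ _ srep (fun s => bullet_choice_level_choice tv0 sd0)).
Qed.

End IntegralRepresentations.

End ChoquetRepresentation.
Import ChoquetRepresentation.

Theorem corollary1 (R : realType) (V : choiceType) (T F : V) (hTF : T <> F)
    (pref : mixed R V -> mixed R V -> Prop) :
  preference pref ->
  admits_int_rep T F pref ->
  forall (Om : Type) (t : lform V -> set Om) (Sig : set (set Om))
         (lam : set Om -> R),
    model T F t Sig lam ->
    (sound T F t ->
       (int_rep_sound T F pref t Sig lam <-> represents pref t lam)) /\
    (exact T F t -> additive Sig lam ->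
       (int_rep_exact T F pref t Sig lam <-> represents pref t lam)).
Proof.
move=> _ adm Om t Sig lam md; split.
- move=> sd; split; first exact: int_rep_sound_represents.
  move=> rep; have srep : sound_rep T F pref t Sig lam by [].
  by split=> //; exact: (sound_rep_int_rep hTF adm srep).
- move=> ex ad; split; first by case=> -[].
  move=> rep; split; first by split=> //; exact: (admits_int_rep_sound_rep adm).
  move=> Om0 t0 Sig0 lam0 phi srep bc p q lp lq; have [md0 _ rep0] := srep.
  have -> : (fun s => choquet lam (tbullet t0 t s (phi s))) =
            (fun s => choquet lam0 (tcirc t0 s)).
    apply: funext => s; apply: (choquet_tbullet md ad _ (bc s)).
    exact: (represents_lam_eq hTF md rep md0 rep0).
  exact: (sound_rep_int_rep hTF adm srep).
Qed.
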